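(* Let $0\le r\le n$, let $A\in\mathcal{A}_{n+1,r+1}$ with $|\mathrm{lrs}(A)|=i$ and $|\mathrm{rls}(A)|=j$, fix any tiling of the rhombic diagram $\Gamma(X(A))$, and let $T(A)$ be the filling obtained by applying the fusion-exchange algorithm to $A$. Then $\mathrm{wt}(T(A))=\alpha^{n-r-i}\beta^{n-r-j}$ at $q=1$.
   Context: Words and diagrams. For $0\le r\le n$ let $B_n^r$ be the set of words $X\in\{H,L,0\}^n$ with exactly $r$ letters $L$. If $X$ has $k$ letters $H$, $r$ letters $L$ and $\ell$ letters $0$, its rhombic diagram $\Gamma(X)$ is the closed region bounded by two paths of unit steps, using the directions west (horizontal), south (vertical) and southwest (diagonal: a fixed unit vector strictly between west and south), both going from a point $P$ to a point $Q$: the northwest boundary consists of $\ell$ west steps, then $r$ southwest steps, then $k$ south steps; the southeast boundary is obtained by reading $X$ left to right and taking a west step for each $0$, a southwest step for each $L$, a south step for each $H$. A tiling of $\Gamma(X)$ is a tiling by unit rhombi of three kinds: squares (horizontal and vertical edges), tall rhombi (vertical and diagonal edges), short rhombi (horizontal and diagonal edges). A west-strip (resp. north-strip, northwest-strip) is a maximal set of tiles connected through shared vertical (resp. horizontal, diagonal) edges; each runs from an edge of the southeast boundary to an edge of the northwest boundary, and each edge of the tiling lies in exactly one strip, of the type of its direction. Each tile has two edges on its lower-right side: its east edge (vertical for squares and tall rhombi, diagonal for short rhombi) and its south edge (horizontal for squares and short rhombi, diagonal for tall rhombi); the parallel edges on its upper-left side are its west and north edges. Weight. For a filling $T$ of the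 tiles of a tiling of $\Gamma(X)$ by symbols $\alpha,\beta,q$ (tiles may be empty), $\mathrm{wt}(T)=\alpha^k\beta^\ell\cdot(\text{product of all symbols in }T)$, with $k,\ell$ the numbers of $H$'s and $0$'s in $X$. Assemblées. An assemblée of size $(m,s)$ is a collection of $s$ nonempty, pairwise disjoint, linearly ordered sets (blocks) with union $\{1,\dots,m\}$; the last element of a block is its block-end. Blocks are listed in the canonical order with decreasing block-ends, and the assemblée is identified with the concatenated word. $\mathcal{A}_{m,s}$ is the set of these. For $A\in\mathcal{A}_{n+1,r+1}$ with block-ends $b_1>\dots>b_{r+1}$: $\mathrm{lrs}(A)$ is the set of $x>b_1$ larger than every element $y>b_1$ to the right of $x$ in $A$; $\mathrm{rls}(A)$ is the set of $x<b_{r+1}$ larger than every $y<b_{r+1}$ to the left of $x$ in $A$. A non-block-end element $x$ is an increase if $x+1$ appears to the right of $x$ in $A$, and a decrease otherwise (so $n+1$, if not a block-end, is a decrease). $X(A)\in B_n^r$ is obtained from $A$ by deleting its last letter $b_{r+1}$ and replacing each increase by $H$, each decrease by $0$ and each remaining block-end by $L$. Fusion-exchange algorithm. A label is a finite, possibly empty, set of consecutive integers; for labels $E,S$ write $E\succ S$ if both are nonempty and $\min E=\max S+1$. Given $A\in\mathcal{A}_{n+1,r+1}$ and a tiling of $\Gamma(X(A))$: initially the southeast boundary edges, in order from $P$ to $Q$, receive the singleton labels of the letters of $A$ from left to right, $b_{r+1}$ omitted. Step: choose a tile whose east and south edges are labeled, say by $E$ and $S$, and whose west and north edges are not. (R I)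 If $E\succ S$ and the south edge is horizontal: west edge gets $E\cup S$, north edge gets $\emptyset$, place $\alpha$ in the tile. (R II) If $S\succ E$ and the east edge is vertical: north edge gets $E\cup S$, west edge gets $\emptyset$, place $\beta$. (R III) Otherwise: west edge gets $E$, north edge gets $S$, and place $q$ if $E\ne\emptyset$ and $S\ne\emptyset$ (else leave the tile empty). Repeat until every edge is labeled; $T(A)$ is the resulting filling. *)

From HB Require Import structures.
From mathcomp Require Import all_boot all_order all_algebra.
Set Implicit Arguments. Unset Strict Implicit. Unset Printing Implicit Defensive.

Inductive letter := LH | LL | L0.

Definition letter_eqb (a b : letter) : bool :=
  match a, b with LH, LH | LL, LL | L0, L0 => true | _, _ => false end.
Lemma letter_eqP : Equality.axiom letter_eqb.
Proof. by case; case; constructor. Qed.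
HB.instance Definition _ := hasDecEq.Build letter letter_eqP.

(* Order of the directions along the northwest boundary: 0 (west) first,
   then L (southwest), then H (south). *)
Definition lrank (a : letter) : nat := match a with L0 => 0 | LL => 1 | LH => 2 end.

(* An assemblee of size (m,s), listed in canonical order, is represented by
   the list of its blocks (each block a list, in its linear order). *)
Definition block_ends (A : seq (seq nat)) : seq nat := map (last 0) A.

Definition is_assemblee (m s : nat) (A : seq (seq nat)) : bool :=
  [&& size A == s, all (fun b => b != [::]) A,
      perm_eq (flatten A) (iota 1 m)
    & sorted (fun a b => b < a) (block_ends A)].

Definition aword (A : seq (seq nat)) : seq nat := flatten A.
Definition bfirst (A : seq (seq nat)) : nat := head 0 (block_ends A).
Definition blast (A : seq (seq nat)) : nat := last 0 (block_ends A).

Definition lrs (A : seq (seq nat)) : seq nat :=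
  let w := aword A in
  [seq nth 0 w p | p <- iota 0 (size w) &
     (bfirst A < nth 0 w p) &&
     all (fun y => (bfirst A < y) ==> (y < nth 0 w p)) (drop p.+1 w)].

Definition rls (A : seq (seq nat)) : seq nat :=
  let w := aword A in
  [seq nth 0 w p | p <- iota 0 (size w) &
     (nth 0 w p < blast A) &&
     all (fun y => (y < blast A) ==> (y < nth 0 w p)) (take p w)].

Definition is_block_end (A : seq (seq nat)) (x : nat) : bool :=
  x \in block_ends A.

Definition is_increase (A : seq (seq nat)) (x : nat) : bool :=
  ~~ is_block_end A x && (x.+1 \in drop (index x (aword A)).+1 (aword A)).

Definition letter_of (A : seq (seq nat)) (x : nat) : letter :=
  if is_block_end A x then LL else if is_increase A x then LH else L0.

Definition aword_trunc (A : seq (seq nat)) : seq nat :=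
  take (size (aword A)).-1 (aword A).

Definition XA (A : seq (seq nat)) : seq letter := map (letter_of A) (aword_trunc A).

(* The boundary paths from P to Q are encoded by words (0 = west step,
   L = southwest step, H = south step).  A tile whose east and south edges
   are consecutive edges p, p+1 of the current path (read from P) has
   east-edge direction x = w_p and south-edge direction y = w_{p+1} with
   lrank x > lrank y (square: x=H,y=0; tall rhombus: x=H,y=L;
   short rhombus: x=L,y=0).  Adding it replaces x y by y x (north edge, then
   west edge).  A tiling of Gamma(X) is encoded by an order in which its
   tiles can be added, starting from the southeast boundary X, until the
   northwest boundary 0^l L^r H^k is reached. *)
Definition tile_ok (w : seq letter) (p : nat) : bool :=
  (p.+1 < size w) && (lrank (nth L0 w p.+1) < lrank (nth L0 w p)).

Definition swap_at (T : Type) (d : T) (w : seq T) (p : nat) : seq T :=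
  set_nth d (set_nth d w p (nth d w p.+1)) p.+1 (nth d w p).

Fixpoint apply_tiles (w : seq letter) (s : seq nat) : option (seq letter) :=
  match s with
  | [::] => Some w
  | p :: s' => if tile_ok w p then apply_tiles (swap_at L0 w p) s' else None
  end.

Definition nw_word (X : seq letter) : seq letter :=
  nseq (count_mem L0 X) L0 ++ nseq (count_mem LL X) LL ++ nseq (count_mem LH X) LH.

Definition is_tiling (X : seq letter) (s : seq nat) : bool :=
  apply_tiles X s == Some (nw_word X).

Definition label := seq nat. (* a finite set of consecutive integers *)

Definition lmin (E : label) : nat := foldr minn (head 0 E) E.
Definition lmax (E : label) : nat := foldr maxn 0 E.
Definition lsucc (E S : label) : bool :=
  [&& E != [::], S != [::] & lmin E == (lmax S).+1].

Inductive sym := SAlpha | SBeta | SQ.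
Definition sym_eqb (a b : sym) : bool :=
  match a, b with SAlpha, SAlpha | SBeta, SBeta | SQ, SQ => true | _, _ => false end.
Lemma sym_eqP : Equality.axiom sym_eqb.
Proof. by case; case; constructor. Qed.
HB.instance Definition _ := hasDecEq.Build sym sym_eqP.

(* x = direction of the east edge, y = direction of the south edge,
   E, S their labels; returns (west label, north label, tile content) *)
Definition fe_rule (x y : letter) (E S : label) : label * label * option sym :=
  if (y == L0) && lsucc E S then (E ++ S, [::], Some SAlpha)
  else if (x == LH) && lsucc S E then ([::], E ++ S, Some SBeta)
  else (E, S, if (E != [::]) && (S != [::]) then Some SQ else None).

(* Runs the algorithm, processing the tiles in the order s; returns the
   filling as the list of tile contents (one entry per tile). *)
Fixpoint fe_fill (w : seq letter) (lab : seq label) (s : seq nat)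
  : seq (option sym) :=
  match s with
  | [::] => [::]
  | p :: s' =>
    let x := nth L0 w p in let y := nth L0 w p.+1 in
    let E := nth [::] lab p in let S := nth [::] lab p.+1 in
    let '(west, north, c) := fe_rule x y E S in
    let w' := swap_at L0 w p in
    let lab' := set_nth [::] (set_nth [::] lab p north) p.+1 west in
    c :: fe_fill w' lab' s'
  end.

Definition init_labels (A : seq (seq nat)) : seq label :=
  map (fun x => [:: x]) (aword_trunc A).

Definition TA (A : seq (seq nat)) (s : seq nat) : seq (option sym) :=
  fe_fill (XA A) (init_labels A) s.

(* wt(T) = alpha^a beta^b q^c is encoded by its exponent triple (a,b,c). *)
Definition wt (X : seq letter) (T : seq (option sym)) : nat * nat * nat :=
  (count_mem LH X + count_mem (Some SAlpha) T,
   count_mem L0 X + count_mem (Some SBeta) T,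
   count_mem (Some SQ) T).

(* specialization q = 1: the monomial alpha^a beta^b, as the pair (a,b) *)
Definition wt_q1 (X : seq letter) (T : seq (option sym)) : int * int :=
  (Posz (wt X T).1.1, Posz (wt X T).1.2).

(** Follow the algorithm with two pairs of potentials.  The first pair counts
    the edges of the current path that carry a nonempty label and have direction
    0, resp. H.  The second pair counts the records among the maxima of the
    labels: right-to-left records among the maxima above b_1, resp. left-to-right
    records among the maxima in (0, b_{r+1}).  Rule I removes a labelled 0-edge,
    Rule II a labelled H-edge, and Rule III keeps both counts; no rule changes
    the records.  This relies on an invariant of the labels: they are intervals,
    the direction of a labelled edge is the letter of the maximum of its label,
    and the successor of that maximum lies on the side of the path predicted by
    its letter (left for 0, right for H).
    Initially the edge counts are the numbers of 0's and H's of X(A) and the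
    record counts are |lrs(A)| = i and |rls(A)| = j.  On the northwest boundary
    0^l L^r H^k the labelled 0-edges are exactly the first records and the
    labelled H-edges exactly the second ones.  Hence T(A) has #0 - i letters
    alpha and #H - j letters beta, and #0 + #H = n - r gives the weight. *)

From mathcomp Require Import all_boot all_order all_algebra.
From mathcomp Require Import zify.
Set Implicit Arguments. Unset Strict Implicit. Unset Printing Implicit Defensive.

Lemma ne_cat (T : eqType) (s1 s2 : seq T) : s1 != [::] -> s1 ++ s2 != [::].
Proof. by case: s1. Qed.

Section FlattenNth.

Variable T : eqType.
Implicit Types X : seq (seq T).

Lemma mem_flatten_rev X : flatten (rev X) =i flatten X.
Proof.
by move=> v; apply/flattenP/flattenP => [] [J hJ hv]; exists J; rewrite ?mem_rev in hJ *.
Qed.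

Lemma mem_flatten_take X q (v : T) :
  v \in flatten (take q X) <-> exists2 i, i < minn q (size X) & v \in nth [::] X i.
Proof.
split=> [/flattenP [J /(nthP [::]) [i hi <-]]|[i hi hv]].
  move: hi; rewrite size_take_min => hi; have := hi; rewrite leq_min => /andP [hq _].
  by rewrite nth_take // => hv; exists i.
apply/flattenP; exists (nth [::] X i) => //; move: hi; rewrite leq_min => /andP [h1 h2].
by rewrite -(nth_take [::] h1) mem_nth // size_take_min leq_min h1.
Qed.

Lemma mem_flatten_drop X q (v : T) :
  v \in flatten (drop q.+1 X) <-> exists2 i, q < i < size X & v \in nth [::] X i.
Proof.
split=> [/flattenP [J /(nthP [::]) [i hi <-]]|[i /andP [h1 h2] hv]].
  move: hi; rewrite nth_drop size_drop => hi hv.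
  by exists (q.+1 + i); rewrite // leq_addr -ltn_subRL.
apply/flattenP; exists (nth [::] X i) => //.
by rewrite -(subnKC h1) -nth_drop mem_nth // size_drop ltn_subRL subnKC.
Qed.

Lemma uniq_flatten_nth X i j (v : T) : uniq (flatten X) ->
  i < size X -> j < size X -> v \in nth [::] X i -> v \in nth [::] X j -> i = j.
Proof.
wlog lt_ij : i j / i <= j => [hwlog u hi hj vi vj|u hi hj vi vj].
  by case: (leqP i j) => h; [|apply/esym]; apply: hwlog => //; apply: ltnW.
apply/eqP; rewrite eqn_leq lt_ij /= leqNgt; apply/negP => ltij.
have := u; rewrite -(cat_take_drop j X) flatten_cat (drop_nth [::] hj) cat_uniq /=.
case/and3P=> _ /hasPn /(_ v) + _; rewrite mem_cat vj => /(_ isT) /negP; apply.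
by apply/mem_flatten_take; exists i; rewrite // leq_min ltij.
Qed.

End FlattenNth.

Lemma count_iotaS (f : pred nat) m n :
  count f (iota m.+1 n) = count (fun q => f q.+1) (iota m n).
Proof. by elim: n m => //= n IH m; rewrite IH. Qed.

Lemma count_zip_nth (T1 T2 : Type) (d1 : T1) (d2 : T2) (P : pred (T1 * T2)) s1 s2 :
  size s1 = size s2 ->
  count P (zip s1 s2) = count (fun q => P (nth d1 s1 q, nth d2 s2 q)) (iota 0 (size s2)).
Proof.
by elim: s1 s2 => [|a s1 IH] [|b s2] //= [h]; rewrite IH // count_iotaS.
Qed.

Section ListSurgery.

Variables (T : Type) (d : T).

Lemma take_nth_drop2 (s : seq T) p : p.+1 < size s ->
  s = take p s ++ nth d s p :: nth d s p.+1 :: drop p.+2 s.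
Proof.
by move=> h; rewrite -{1}(cat_take_drop p s) (drop_nth d (ltnW h)) (drop_nth d h).
Qed.

Lemma set_nth2_cat pre a b post (u v : T) :
  set_nth d (set_nth d (pre ++ a :: b :: post) (size pre) u) (size pre).+1 v =
  pre ++ u :: v :: post.
Proof. by elim: pre => //= x pre ->. Qed.

Lemma swap_at_cat pre (a b : T) post :
  swap_at d (pre ++ a :: b :: post) (size pre) = pre ++ b :: a :: post.
Proof. by rewrite /swap_at; elim: pre => //= x pre ->. Qed.

End ListSurgery.

(** * Labels *)

Lemma leq_lmax (I : label) v : v \in I -> v <= lmax I.
Proof.
elim: I => //= a I IH; rewrite in_cons => /orP [/eqP->|/IH h].
  by rewrite leq_maxl.
by rewrite (leq_trans h) // leq_maxr.
Qed.

Lemma lmax_mem (I : label) : I != [::] -> lmax I \in I.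
Proof.
elim: I => //= a [|b I] IH _; first by rewrite maxn0 mem_head.
rewrite in_cons; case: (leqP a (lmax (b :: I))) => _; last by rewrite eqxx.
by rewrite IH ?orbT.
Qed.

Lemma lmax1 x : lmax [:: x] = x.
Proof. by rewrite /lmax /= maxn0. Qed.

Lemma foldr_minn_leq d (s : seq nat) v : v \in d :: s -> foldr minn d s <= v.
Proof.
elim: s v => [|a s IH] v /=; first by rewrite inE => /eqP->.
rewrite !inE => /orP [/eqP->|/orP [/eqP->|h]]; rewrite ?geq_minl //.
  by apply: leq_trans (geq_minr _ _) _; apply: IH; rewrite mem_head.
by apply: leq_trans (geq_minr _ _) _; apply: IH; rewrite inE h orbT.
Qed.

Lemma foldr_minn_mem d (s : seq nat) : foldr minn d s \in d :: s.
Proof.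
elim: s => [|a s IH] /=; first by rewrite mem_head.
rewrite !inE; case: (leqP a (foldr minn d s)) => _; first by rewrite eqxx orbT.
by move: IH; rewrite inE => /orP [->|->]; rewrite ?orbT.
Qed.

Lemma geq_lmin (I : label) v : v \in I -> lmin I <= v.
Proof. by case: I => // a I h; apply: foldr_minn_leq; rewrite inE h orbT. Qed.

Lemma lmin_mem (I : label) : I != [::] -> lmin I \in I.
Proof.
case: I => // a I _; have := foldr_minn_mem a (a :: I).
by rewrite /lmin /= inE => /orP [/eqP->|]; rewrite ?mem_head.
Qed.

Lemma lmin_least (I : label) m : m \in I -> (forall v, v \in I -> m <= v) -> lmin I = m.
Proof.
move=> hm hv; apply/eqP; rewrite eqn_leq geq_lmin // hv // lmin_mem //.
by case: I hm {hv}.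
Qed.

Lemma lmax_greatest (I : label) m : m \in I -> (forall v, v \in I -> v <= m) -> lmax I = m.
Proof.
move=> hm hv; apply/eqP; rewrite eqn_leq leq_lmax // andbT hv // lmax_mem //.
by case: I hm {hv}.
Qed.

Definition consecutive (I : label) : Prop :=
  I != [::] -> forall v, (v \in I) = (lmin I <= v <= lmax I).

Lemma consecutive1 x : consecutive [:: x].
Proof.
move=> _ v; rewrite /lmin /lmax /= minnn maxn0 inE.
by rewrite eqn_leq andbC.
Qed.

Lemma lsucc_lmax (hi lo : label) : lsucc hi lo -> lmax lo < lmax hi.
Proof.
by case/and3P=> nh _ /eqP hm; rewrite -hm geq_lmin // lmax_mem.
Qed.

Lemma consecutive_merge (lo hi X : label) : lsucc hi lo ->
  consecutive lo -> consecutive hi -> X =i lo ++ hi -> consecutive X.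
Proof.
move=> /and3P [nhi nlo /eqP hm] clo chi hX.
have l1 := geq_lmin (lmax_mem nlo); have l2 := geq_lmin (lmax_mem nhi).
have emin : lmin X = lmin lo.
  apply: lmin_least => [|v]; first by rewrite hX mem_cat lmin_mem.
  rewrite hX mem_cat => /orP [/geq_lmin //|]; rewrite chi // hm; lia.
have emax : lmax X = lmax hi.
  apply: lmax_greatest => [|v]; first by rewrite hX mem_cat lmax_mem ?orbT.
  rewrite hX mem_cat => /orP [|/leq_lmax //]; rewrite clo //; lia.
move=> _ v; rewrite hX mem_cat clo // chi // emin emax hm.
by apply/idP/idP => [/orP [] /andP []|/andP []] *; try apply/orP; try apply/andP; lia.
Qed.

Lemma consecutive_cat (E S : label) : lsucc E S || lsucc S E ->
  consecutive E -> consecutive S -> consecutive (E ++ S).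
Proof.
case/orP=> h cE cS; last exact: consecutive_merge h cE cS _.
by apply: consecutive_merge h cS cE _ => v; rewrite !mem_cat orbC.
Qed.

Lemma lmax_cat (E S : label) : lmax (E ++ S) = maxn (lmax E) (lmax S).
Proof. by elim: E => [|a E IH] /=; rewrite ?max0n // IH maxnA. Qed.

Lemma lsucc_lmax_catl (E S : label) : lsucc E S -> lmax (E ++ S) = lmax E.
Proof. by move/lsucc_lmax/ltnW/maxn_idPl; rewrite lmax_cat. Qed.

Lemma lsucc_lmax_catr (E S : label) : lsucc S E -> lmax (E ++ S) = lmax S.
Proof. by move/lsucc_lmax/ltnW/maxn_idPr; rewrite lmax_cat. Qed.

Lemma lmin_at_gap (S : label) v : consecutive S -> v.+1 \in S -> v \notin S ->
  lmin S = v.+1.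
Proof.
move=> cS h1 h2; have nS : S != [::] by case: S h1 {cS h2}.
move: h1 h2; rewrite !cS // => /andP [a b] c.
apply/eqP; rewrite eqn_leq a /= ltnNge; apply/negP => d.
by move: c; rewrite d (leq_trans (leqnSn v) b).
Qed.

Lemma lmax_below_gap (t : seq nat) B (J : label) v : consecutive J ->
  {subset J <= t} -> B \notin t -> v \in J -> v < B -> lmax J < B.
Proof.
move=> cJ tJ hB hv hvB; rewrite ltnNge; apply/negP => h.
have nJ : J != [::] by case: J hv {cJ tJ h}.
have : B \in J by rewrite cJ // h andbT (leq_trans (geq_lmin hv)) // ltnW.
by move/tJ; rewrite (negbTE hB).
Qed.

Lemma lsucc_below_gap (t : seq nat) B (hi lo : label) : lsucc hi lo ->
  consecutive hi -> {subset hi <= t} -> B \notin t -> lmax lo < B -> lmax hi < B.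
Proof.
move=> /and3P [nh _ /eqP hm] ch th hB hl.
have m1 : (lmax lo).+1 \in hi by rewrite -hm lmin_mem.
apply: (lmax_below_gap ch th hB m1); rewrite ltn_neqAle hl andbT.
by apply: contraNneq hB => <-; apply: th.
Qed.

(** * Records *)

Definition below (g : pred nat) m (X : seq label) :=
  all (fun J => g (lmax J) ==> (lmax J < m)) X.
Arguments below : simpl never.

Fixpoint records (g : pred nat) (X : seq label) : nat :=
  if X is J :: X' then (g (lmax J) && below g (lmax J) X') + records g X' else 0.

Lemma below_cons g m J X :
  below g m (J :: X) = (g (lmax J) ==> (lmax J < m)) && below g m X.
Proof. by []. Qed.

Lemma eq_below_cons2 g m a b a' b' X : below g m [:: a; b] = below g m [:: a'; b'] ->
  below g m [:: a, b & X] = below g m [:: a', b' & X].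
Proof. by rewrite /below /= !andbT !andbA => ->. Qed.

Lemma below_pairC g m a b : below g m [:: a; b] = below g m [:: b; a].
Proof. by rewrite /below /= !andbT andbC. Qed.

Lemma below_cat g m X Y : below g m (X ++ Y) = below g m X && below g m Y.
Proof. exact: all_cat. Qed.

Lemma below_rev g m X : below g m (rev X) = below g m X.
Proof. exact: all_rev. Qed.

Lemma implyb_lt_monotone (g : pred nat) lo hi m : lo < hi -> (g lo -> g hi) ->
  (g hi ==> (hi < m)) && (g lo ==> (lo < m)) = (g hi ==> (hi < m)).
Proof.
move=> lt_lo_hi g_hi; case g_lo: (g lo); rewrite ?andbT //= g_hi //=.
by case: ltnP => // /(ltn_trans lt_lo_hi) ->.
Qed.

Lemma below_witness (g : pred nat) m X v : v \in flatten X ->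
  (forall J, J \in X -> v \in J -> g (lmax J) /\ m <= lmax J) -> below g m X = false.
Proof.
move=> /flattenP [J hJ hv] h; apply/negbTE/allPn; exists J => //.
by have [-> ] := h J hJ hv; rewrite -leqNgt.
Qed.

Lemma eq_records_catl g pre X X' : (forall m, below g m X = below g m X') ->
  records g X = records g X' -> records g (pre ++ X) = records g (pre ++ X').
Proof.
move=> eX eR; elim: pre => [|I pre IH] //=.
by rewrite IH !below_cat eX.
Qed.

Lemma records_nth g (X : seq label) : records g X =
  count (fun q => g (lmax (nth [::] X q)) && below g (lmax (nth [::] X q)) (drop q.+1 X))
    (iota 0 (size X)).
Proof. by elim: X => //= J X ->; rewrite count_iotaS drop0. Qed.

Lemma records_rev_nth g (X : seq label) : records g (rev X) =
  count (fun q => g (lmax (nth [::] X q)) && below g (lmax (nth [::] X q)) (take q X))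
    (iota 0 (size X)).
Proof.
elim/last_ind: X => [|X J IH] //.
rewrite rev_rcons /= IH below_rev size_rcons -addn1 iotaD count_cat /= addn0 addnC.
rewrite nth_rcons ltnn eqxx -cats1 take_size_cat //; congr (_ + _).
apply: eq_in_count => q; rewrite mem_iota add0n => /andP [_ hq].
by rewrite nth_cat hq takel_cat // ltnW.
Qed.

(** * Placement of successors *)

Definition succ_placed (tau : nat -> letter) (t pre : seq nat) (I : label)
    (post : seq nat) : Prop :=
  I != [::] -> (lmax I).+1 \in t ->
  (tau (lmax I) = L0 -> (lmax I).+1 \in pre) /\
  (tau (lmax I) = LH -> (lmax I).+1 \in post).

Fixpoint all_succ_placed tau t (pre : seq nat) (lab : seq label) : Prop :=
  if lab is J :: post then
    succ_placed tau t pre J (flatten post) /\ all_succ_placed tau t (pre ++ J) post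
  else True.

Section SuccPlaced.

Variables (tau : nat -> letter) (t : seq nat).

Lemma eq_succ_placed pre pre' I post post' : pre =i pre' -> post =i post' ->
  succ_placed tau t pre I post -> succ_placed tau t pre' I post'.
Proof.
move=> e1 e2 h nI ht; have [a b] := h nI ht.
by split=> [/a|/b]; rewrite ?e1 ?e2.
Qed.

Lemma eq_all_succ_placed pre pre' X : pre =i pre' ->
  all_succ_placed tau t pre X -> all_succ_placed tau t pre' X.
Proof.
elim: X pre pre' => [|I X IH] //= pre pre' e [h1 h2]; split.
  exact: eq_succ_placed h1.
by apply: IH h2 => v; rewrite !mem_cat e.
Qed.

Lemma all_succ_placed_drop pre Q X :
  all_succ_placed tau t pre (Q ++ X) -> all_succ_placed tau t (pre ++ flatten Q) X.
Proof.
elim: Q pre => [|I Q IH] pre /=; first by rewrite cats0.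
by case=> _ /IH; rewrite catA.
Qed.

Lemma all_succ_placed_replace pre Q X X' :
  all_succ_placed tau t pre (Q ++ X) ->
  (all_succ_placed tau t (pre ++ flatten Q) X ->
     all_succ_placed tau t (pre ++ flatten Q) X') ->
  flatten X =i flatten X' -> all_succ_placed tau t pre (Q ++ X').
Proof.
elim: Q pre => [|I Q IH] pre /=; first by rewrite cats0 => h1 h2 _; apply: h2.
move=> [h1 h2] h3 h4; split.
  by apply: eq_succ_placed h1 => // v; rewrite !flatten_cat !mem_cat h4.
by apply: IH => //; rewrite -catA.
Qed.

Lemma all_succ_placedP lab :
  all_succ_placed tau t [::] lab <->
  (forall q, q < size lab -> succ_placed tau t (flatten (take q lab))
                                (nth [::] lab q) (flatten (drop q.+1 lab))).
Proof.
have shift pre : all_succ_placed tau t pre lab <->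
  (forall q, q < size lab -> succ_placed tau t (pre ++ flatten (take q lab))
                                (nth [::] lab q) (flatten (drop q.+1 lab))).
  elim: lab pre => [|I lab IH] pre /=; first by split.
  split=> [[h0 /IH h] [|q] /= hq|h].
  - by apply: eq_succ_placed h0 => v; rewrite ?cats0 ?drop0.
  - by apply: eq_succ_placed (h q hq) => v; rewrite ?catA.
  split; first by apply: eq_succ_placed (h 0 isT) => v; rewrite /= ?cats0 ?drop0.
  by apply/IH => q hq; apply: eq_succ_placed (h q.+1 hq) => v; rewrite /= ?catA.
exact: shift.
Qed.

End SuccPlaced.

(** * One tile *)

Variant fe_rule_spec (x y : letter) (E S : label) :
    label -> label -> option sym -> Prop :=
  | FeRuleI of y = L0 & lsucc E S : fe_rule_spec x y E S (E ++ S) [::] (Some SAlpha)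
  | FeRuleII of x = LH & lsucc S E : fe_rule_spec x y E S [::] (E ++ S) (Some SBeta)
  | FeRuleIII of ~~ ((y == L0) && lsucc E S) & ~~ ((x == LH) && lsucc S E) :
      fe_rule_spec x y E S E S (if (E != [::]) && (S != [::]) then Some SQ else None).

Lemma fe_ruleP x y E S W N c : fe_rule x y E S = (W, N, c) -> fe_rule_spec x y E S W N c.
Proof.
rewrite /fe_rule; case: ifP => [/andP [/eqP-> h] [<- <- <-]|/negbT h1]; first exact: FeRuleI.
case: ifP => [/andP [/eqP-> h] [<- <- <-]|/negbT h2 [<- <- <-]]; first exact: FeRuleII.
exact: FeRuleIII.
Qed.

Lemma fe_rule_perm x y E S W N c : fe_rule x y E S = (W, N, c) ->
  perm_eq (N ++ W) (E ++ S).
Proof.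
by case/fe_ruleP=> *; [rewrite perm_refl|rewrite cats0 perm_refl|rewrite perm_catC].
Qed.

Lemma fe_rule_count x y E S W N c : fe_rule x y E S = (W, N, c) ->
  ((x == L0) && (E != [::])) + ((y == L0) && (S != [::])) =
    (c == Some SAlpha) + (((y == L0) && (N != [::])) + ((x == L0) && (W != [::]))) /\
  ((x == LH) && (E != [::])) + ((y == LH) && (S != [::])) =
    (c == Some SBeta) + (((y == LH) && (N != [::])) + ((x == LH) && (W != [::]))).
Proof.
case/fe_ruleP=> [-> /and3P [nE nS _]|-> /and3P [nS nE _]|_ _].
- by rewrite nE nS (ne_cat _ nE); case: x.
- by rewrite nE nS (ne_cat _ nE); case: y.
- by split; rewrite addnC; case: (_ && _); case: ifP.
Qed.

Definition edge_ok (tau : nat -> letter) (e : letter * label) :=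
  (e.2 != [::]) ==> (e.1 == tau (lmax e.2)).

Definition above (b : nat) : pred nat := fun v => b < v.
Definition inside (B : nat) : pred nat := fun v => 0 < v < B.

Lemma below_above_false b m X v : v \in flatten X -> b < v -> m <= v ->
  below (above b) m X = false.
Proof.
move=> hv hb hm; apply: (below_witness hv) => J _ /leq_lmax hJ.
by rewrite /above; split; lia.
Qed.

Lemma below_inside_false (t : seq nat) B m X v :
  (forall J, J \in X -> consecutive J /\ {subset J <= t}) -> B \notin t ->
  v \in flatten X -> 0 < v < B -> m <= v -> below (inside B) m X = false.
Proof.
move=> hX hB hv /andP [h0 hvB] hm; apply: (below_witness hv) => J hJ hvJ.
have [cJ tJ] := hX J hJ.
have := lmax_below_gap cJ tJ hB hvJ hvB; have := leq_lmax hvJ.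
by rewrite /inside; split; [apply/andP; split|]; lia.
Qed.

Lemma inside_lsucc (t : seq nat) B (hi lo : label) : B \notin t -> lsucc hi lo ->
  consecutive hi -> {subset hi <= t} -> inside B (lmax lo) -> inside B (lmax hi).
Proof.
move=> hB h ch th /andP [h0 hlo]; have lt := lsucc_lmax h.
by rewrite /inside (lsucc_below_gap h ch th hB hlo) andbT; lia.
Qed.

(* The properties of an assemblee A used below, for t its word without its last
   letter B = b_{r+1}, tau = letter_of A and b1 = b_1. *)
Record word_axioms (tau : nat -> letter) (t : seq nat) (b1 B : nat) : Prop := {
  wa_uniq : uniq t;
  wa_pos : forall v, v \in t -> 0 < v;
  wa_B : B \notin t;
  wa_b1 : b1 \in t -> tau b1 = LL;
  wa_above_b1 : forall v, v \in t -> b1 < v -> tau v != LL;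
  wa_below_B : forall v, v \in t -> v < B -> tau v != LL;
  wa_incr : forall v, v \in t -> tau v = LH -> v.+1 \in t \/ v.+1 = B;
  wa_incr_above_b1 : forall v, v \in t -> b1 < v -> tau v = LH -> v.+1 \in t;
  wa_decr_below_B : forall v, v \in t -> v < B -> tau v = L0 -> v.+1 \in t;
  wa_decr_top : forall v, v \in t -> tau v = L0 -> v.+1 \notin t ->
    b1 < v /\ forall u, u \in t -> u <= v }.

Section TileStep.

Variables (tau : nat -> letter) (t : seq nat) (b1 B : nat).
Hypothesis Hw : word_axioms tau t b1 B.

Record tile_context (lpre : seq label) (x y : letter) (E S : label)
    (lpost : seq label) : Prop := {
  ctx_consE : consecutive E;
  ctx_consS : consecutive S;
  ctx_pre : forall J, J \in lpre -> consecutive J /\ {subset J <= t};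
  ctx_subE : {subset E <= t};
  ctx_subS : {subset S <= t};
  ctx_disjoint : forall v, v \in E -> v \notin S;
  ctx_x : E != [::] -> x = tau (lmax E);
  ctx_y : S != [::] -> y = tau (lmax S);
  ctx_innerE : forall v, v \in E -> v != lmax E -> tau v != LL;
  ctx_innerS : forall v, v \in S -> v != lmax S -> tau v != LL;
  ctx_succE : succ_placed tau t (flatten lpre) E (S ++ flatten lpost);
  ctx_succS : succ_placed tau t (flatten lpre ++ E) S (flatten lpost);
  ctx_rank : lrank y < lrank x }.

Variables (lpre lpost : seq label) (x y : letter) (E S W N : label) (c : option sym).
Hypotheses (C : tile_context lpre x y E S lpost) (rule : fe_rule x y E S = (W, N, c)).

Lemma ctx_lsucc_SE : E != [::] -> (lmax E).+1 \in S -> lsucc S E.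
Proof.
move=> nE hS; have nS : S != [::] by apply: contraTneq hS => ->.
rewrite /lsucc nS nE (lmin_at_gap (ctx_consS C) hS) ?eqxx //.
exact: ctx_disjoint C _ (lmax_mem nE).
Qed.

Lemma ctx_lsucc_ES : S != [::] -> (lmax S).+1 \in E -> lsucc E S.
Proof.
move=> nS hE; have nE : E != [::] by apply: contraTneq hE => ->.
rewrite /lsucc nS nE (lmin_at_gap (ctx_consE C) hE) ?eqxx //.
by apply: contraL (lmax_mem nS) => /(ctx_disjoint C).
Qed.

Lemma step_consecutive : consecutive N /\ consecutive W.
Proof.
have cE := ctx_consE C; have cS := ctx_consS C.
by case/fe_ruleP: rule => [_ h|_ h|_ _]; split=> //; apply: consecutive_cat; rewrite ?h ?orbT.
Qed.

Lemma step_edges : edge_ok tau (y, N) /\ edge_ok tau (x, W).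
Proof.
rewrite /edge_ok /=; case/fe_ruleP: rule => [_ h|_ h|_ _].
- case/and3P: (h) => nE _ _.
  by rewrite lsucc_lmax_catl // -(ctx_x C nE) !eqxx implybT.
- case/and3P: (h) => nS _ _.
  by rewrite lsucc_lmax_catr // -(ctx_y C nS) !eqxx implybT.
- by split; apply/implyP; [move/(ctx_y C)|move/(ctx_x C)] => ->.
Qed.

Lemma step_inner :
  (forall v, v \in N -> v != lmax N -> tau v != LL) /\
  (forall v, v \in W -> v != lmax W -> tau v != LL).
Proof.
have iE := ctx_innerE C; have iS := ctx_innerS C.
case/fe_ruleP: rule => [hy h|hx h|_ _]; last by split.
- case/and3P: (h) => nE nS _; split=> // v; rewrite lsucc_lmax_catl // mem_cat.
  case/orP=> [/iE //|hv hn]; have [->|] := eqVneq v (lmax S); last exact: iS.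
  by rewrite -(ctx_y C nS) hy.
- case/and3P: (h) => nS nE _; split=> // v; rewrite lsucc_lmax_catr // mem_cat.
  case/orP=> [hv hn|/iS //]; have [->|] := eqVneq v (lmax E); last exact: iE.
  by rewrite -(ctx_x C nE) hx.
Qed.

Lemma step_succ :
  succ_placed tau t (flatten lpre) N (W ++ flatten lpost) /\
  succ_placed tau t (flatten lpre ++ N) W (flatten lpost).
Proof.
have sE := ctx_succE C; have sS := ctx_succS C.
case/fe_ruleP: rule => [hy h|hx h|n1 n2].
- case/and3P: (h) => nE nS _; split=> // _; rewrite lsucc_lmax_catl // cats0 => ht.
  have [a b] := sE nE ht; split=> // /b; rewrite mem_cat => /orP [/leq_lmax|//].
  by have := lsucc_lmax h; lia.
- case/and3P: (h) => nS nE _; split=> // _; rewrite lsucc_lmax_catr // => ht.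
  have [a b] := sS nS ht; split=> // /a; rewrite mem_cat => /orP [//|/leq_lmax].
  by have := lsucc_lmax h; lia.
- split=> [nS ht|nE ht].
  + have [a b] := sS nS ht; split=> [h0|/b]; last by rewrite mem_cat => ->; rewrite orbT.
    move: (a h0); rewrite mem_cat => /orP [//|/(ctx_lsucc_ES nS) hs].
    by move: n1; rewrite (ctx_y C nS) h0 hs.
  + have [a b] := sE nE ht; split=> [/a|hH]; first by rewrite mem_cat => ->.
    move: (b hH); rewrite mem_cat => /orP [/(ctx_lsucc_SE nE) hs|//].
    by move: n2; rewrite (ctx_x C nE) hH hs.
Qed.

Lemma below_step (g : pred nat) m : ~~ g 0 ->
  (lsucc E S -> g (lmax S) -> g (lmax E)) -> (lsucc S E -> g (lmax E) -> g (lmax S)) ->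
  below g m [:: N; W] = below g m [:: E; S].
Proof.
move=> g0 monoES monoSE; rewrite !below_cons /below /= !andbT.
case/fe_ruleP: rule => [_ h|_ h|_ _] /=; last exact: andbC.
- rewrite (negbTE g0) /= lsucc_lmax_catl //.
  by rewrite (implyb_lt_monotone _ (lsucc_lmax h) (monoES h)).
- rewrite (negbTE g0) /= andbT lsucc_lmax_catr // andbC.
  by rewrite (implyb_lt_monotone _ (lsucc_lmax h) (monoSE h)).
Qed.

Lemma above_b1_east : above b1 (lmax E) -> [/\ E != [::], x = LH & tau (lmax E) = LH].
Proof.
move=> hb; have nE : E != [::] by apply: contraTneq hb => ->.
have eT : lmax E \in t := ctx_subE C (lmax_mem nE).
move: (ctx_rank C) (wa_above_b1 Hw eT hb); rewrite (ctx_x C nE).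
by case: (tau _) => //; case: y.
Qed.

(* A maximum above b1 is an increase whose successor lies further right, outside
   S: no later label with a smaller maximum above b1 can be a record. *)
Lemma above_b1_blocked m : above b1 (lmax E) -> (lmax E).+1 \notin S ->
  m <= (lmax E).+1 -> below (above b1) m lpost = false.
Proof.
move=> hb nS hm; have [nE _ tH] := above_b1_east hb.
have eT : lmax E \in t := ctx_subE C (lmax_mem nE).
have [_ /(_ tH)] := ctx_succE C nE (wa_incr_above_b1 Hw eT hb tH).
by rewrite mem_cat (negbTE nS) => /below_above_false; apply=> //; apply: ltnW.
Qed.

Lemma records_above_step :
  records (above b1) (N :: W :: lpost) = records (above b1) (E :: S :: lpost).
Proof.
rewrite /= !below_cons; case/fe_ruleP: rule => [hy h|hx h|n1 n2] /=.
- have lt := lsucc_lmax h; rewrite lsucc_lmax_catl // lt implybT.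
  case gS: (above b1 (lmax S)) => //=.
  have gE : above b1 (lmax E) by apply: ltn_trans lt.
  have nS : (lmax E).+1 \notin S by apply/negP => /leq_lmax; lia.
  by rewrite (above_b1_blocked (m := lmax S) gE nS) //; lia.
- have lt := lsucc_lmax h; rewrite lsucc_lmax_catr //=.
  case gE: (above b1 (lmax E)) => //=.
  have gS : above b1 (lmax S) := ltn_trans gE lt.
  by rewrite gS /= ltnNge (ltnW lt).
- case gE: (above b1 (lmax E)) => /=; last by case: (_ && _) => /=; lia.
  have [nE xH _] := above_b1_east gE.
  have nS : (lmax E).+1 \notin S.
    by apply/negP => /(ctx_lsucc_SE nE) hs; move: n2; rewrite xH hs.
  rewrite (above_b1_blocked (m := lmax E) gE nS) // andbF /=.
  case bS: (below (above b1) (lmax S) lpost); rewrite ?andbF /=; last lia.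
  have lt : lmax E < lmax S.
    rewrite ltnNge; apply: contraTN bS => le.
    by rewrite (above_b1_blocked gE nS) //; lia.
  by rewrite lt andbT; case: (above b1 (lmax S)) => /=; lia.
Qed.

Lemma inside_B_south : inside B (lmax S) -> [/\ S != [::], y = L0 & tau (lmax S) = L0].
Proof.
case/andP=> h0 hb; have nS : S != [::] by apply: contraTneq h0 => ->.
have sT := ctx_subS C (lmax_mem nS).
move: (ctx_rank C) (wa_below_B Hw sT hb); rewrite (ctx_y C nS).
by case: (tau _) => //; case: x.
Qed.

(* Symmetrically, a maximum in (0, B) is a decrease whose successor lies further
   left, outside E. *)
Lemma inside_B_blocked m : inside B (lmax S) -> (lmax S).+1 \notin E ->
  m <= (lmax S).+1 -> below (inside B) m (rev lpre) = false.
Proof.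
move=> hg nE hm; have [nS _ t0] := inside_B_south hg; case/andP: (hg) => _ hb.
have sT := ctx_subS C (lmax_mem nS).
have s1 := wa_decr_below_B Hw sT hb t0.
have [/(_ t0) + _] := ctx_succS C nS s1; rewrite mem_cat (negbTE nE) orbF => hv.
have s1B : (lmax S).+1 < B.
  by rewrite ltn_neqAle hb andbT; apply: contraNneq (wa_B Hw) => <-.
apply: (below_inside_false _ (wa_B Hw) _ _ hm); rewrite ?mem_flatten_rev ?s1B //.
by move=> J; rewrite mem_rev; apply: (ctx_pre C).
Qed.

Lemma records_inside_step :
  records (inside B) (W :: N :: rev lpre) = records (inside B) (S :: E :: rev lpre).
Proof.
have monoES : lsucc E S -> inside B (lmax S) -> inside B (lmax E).
  by move=> h; apply: inside_lsucc (wa_B Hw) h (ctx_consE C) (ctx_subE C).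
have monoSE : lsucc S E -> inside B (lmax E) -> inside B (lmax S).
  by move=> h; apply: inside_lsucc (wa_B Hw) h (ctx_consS C) (ctx_subS C).
rewrite /= !below_cons; case/fe_ruleP: rule => [hy h|hx h|n1 n2] /=.
- have lt := lsucc_lmax h; rewrite lsucc_lmax_catl //=.
  case gS: (inside B (lmax S)) => //=.
  by rewrite (monoES h gS) /= ltnNge (ltnW lt).
- have lt := lsucc_lmax h; rewrite lsucc_lmax_catr // lt implybT.
  case gE: (inside B (lmax E)) => //=.
  have gS := monoSE h gE.
  have nE : (lmax S).+1 \notin E by apply/negP => /leq_lmax; lia.
  by rewrite (inside_B_blocked (m := lmax E) gS nE) //; lia.
- case gS: (inside B (lmax S)) => /=; last by case: (_ && _) => /=; lia.
  have [nS y0 _] := inside_B_south gS.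
  have nE : (lmax S).+1 \notin E.
    by apply/negP => /(ctx_lsucc_ES nS) hs; move: n1; rewrite y0 hs.
  rewrite (inside_B_blocked (m := lmax S) gS nE) // andbF /=.
  case bE: (below (inside B) (lmax E) (rev lpre)); rewrite ?andbF /=; last lia.
  have lt : lmax S < lmax E.
    rewrite ltnNge; apply: contraTN bE => le.
    by rewrite (inside_B_blocked gS nE) //; lia.
  by rewrite lt andbT; case: (inside B (lmax E)) => /=; lia.
Qed.

End TileStep.

(** * Running the algorithm *)

Record fe_invariant (tau : nat -> letter) (t : seq nat) (w : seq letter)
    (lab : seq label) : Prop := {
  inv_size : size w = size lab;
  inv_perm : perm_eq (flatten lab) t;
  inv_consecutive : forall I, I \in lab -> consecutive I;
  inv_edges : all (edge_ok tau) (zip w lab);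
  inv_inner : forall I, I \in lab -> forall v, v \in I -> v != lmax I -> tau v != LL;
  inv_succ : all_succ_placed tau t [::] lab }.

Definition labelled (d : letter) (w : seq letter) (lab : seq label) :=
  count (fun e => (e.1 == d) && (e.2 != [::])) (zip w lab).

Lemma labelled_cat_step wpre wpost lpre lpost x y E S W N c :
  size wpre = size lpre -> fe_rule x y E S = (W, N, c) ->
  labelled L0 (wpre ++ x :: y :: wpost) (lpre ++ E :: S :: lpost) =
    (c == Some SAlpha) + labelled L0 (wpre ++ y :: x :: wpost) (lpre ++ N :: W :: lpost) /\
  labelled LH (wpre ++ x :: y :: wpost) (lpre ++ E :: S :: lpost) =
    (c == Some SBeta) + labelled LH (wpre ++ y :: x :: wpost) (lpre ++ N :: W :: lpost).
Proof.
move=> hs /fe_rule_count [z0 zH].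
have shift (a b0 c0 d k e f : nat) :
  b0 + c0 = k + (e + f) -> a + (b0 + (c0 + d)) = k + (a + (e + (f + d))) by lia.
by rewrite /labelled !zip_cat // !count_cat /=; split; apply: shift.
Qed.

Section CatStep.

Variables (tau : nat -> letter) (t : seq nat) (b1 B : nat).
Hypothesis Hw : word_axioms tau t b1 B.

Variables (wpre wpost : seq letter) (lpre lpost : seq label) (x y : letter) (E S : label).
Hypotheses (I : fe_invariant tau t (wpre ++ x :: y :: wpost) (lpre ++ E :: S :: lpost))
  (hs : size wpre = size lpre) (rk : lrank y < lrank x).

Let mem_lab (a b J : label) :
  (J \in lpre ++ a :: b :: lpost) = [|| J \in lpre, J == a, J == b | J \in lpost].
Proof. by rewrite mem_cat !inE. Qed.

Lemma tile_context_of_invariant : tile_context tau t lpre x y E S lpost.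
Proof.
have := inv_edges I; rewrite zip_cat // all_cat /= => /and4P [_ ex ey _].
have := all_succ_placed_drop (inv_succ I); rewrite /= => -[sE [sS _]].
have sub J : J \in lpre ++ E :: S :: lpost -> {subset J <= t}.
  move=> hJ v hv; rewrite -(perm_mem (inv_perm I)); apply/flattenP; by exists J.
have u : uniq (flatten lpre ++ E ++ S ++ flatten lpost).
  by have := wa_uniq Hw; rewrite -(perm_uniq (inv_perm I)) flatten_cat.
split=> //.
- by apply: (inv_consecutive I); rewrite mem_lab eqxx orbT.
- by apply: (inv_consecutive I); rewrite mem_lab eqxx !orbT.
- by move=> J hJ; split; [apply: (inv_consecutive I)|apply: sub]; rewrite mem_lab hJ.
- by apply: sub; rewrite mem_lab eqxx orbT.
- by apply: sub; rewrite mem_lab eqxx !orbT.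
- move=> v hE; apply/negP => hS; move: u; rewrite cat_uniq => /and3P [_ _].
  rewrite cat_uniq => /and3P [_ /hasPn /(_ v)]; rewrite mem_cat hS hE.
  by move=> /(_ isT).
- by move=> nE; apply/eqP; move: ex; rewrite /edge_ok /= nE.
- by move=> nS; apply/eqP; move: ey; rewrite /edge_ok /= nS.
- by apply: (inv_inner I); rewrite mem_lab eqxx orbT.
- by apply: (inv_inner I); rewrite mem_lab eqxx !orbT.
Qed.

Variables (W N : label) (c : option sym).
Hypothesis hr : fe_rule x y E S = (W, N, c).

Lemma invariant_cat_step :
  fe_invariant tau t (wpre ++ y :: x :: wpost) (lpre ++ N :: W :: lpost).
Proof.
have C := tile_context_of_invariant.
have [cN cW] := step_consecutive C hr; have [eN eW] := step_edges C hr.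
have [iN iW] := step_inner C hr; have [sN sW] := step_succ C hr.
have memNW : N ++ W =i E ++ S := perm_mem (fe_rule_perm hr).
split.
- by move: (inv_size I); rewrite !size_cat.
- apply: perm_trans (inv_perm I).
  by rewrite !flatten_cat /= perm_cat2l !catA perm_cat2r (fe_rule_perm hr).
- move=> J; rewrite mem_lab => /or4P [hJ|/eqP->|/eqP->|hJ] //;
    by apply: (inv_consecutive I); rewrite mem_lab hJ ?orbT.
- have := inv_edges I; rewrite !zip_cat // !all_cat /= => /and4P [-> _ _ ->].
  by rewrite eN eW.
- move=> J; rewrite mem_lab => /or4P [hJ|/eqP->|/eqP->|hJ] //;
    by apply: (inv_inner I); rewrite mem_lab hJ ?orbT.
- apply: (all_succ_placed_replace (inv_succ I)) => [/= [_ [_ h]]|v].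
    split=> //; split=> //; apply: eq_all_succ_placed h => v.
    by rewrite -!catA !(mem_cat v (flatten lpre)) memNW.
  by rewrite /= !catA !(mem_cat v (_ ++ _)) memNW.
Qed.

Lemma records_cat_step :
  records (above b1) (lpre ++ E :: S :: lpost) =
    records (above b1) (lpre ++ N :: W :: lpost) /\
  records (inside B) (rev (lpre ++ E :: S :: lpost)) =
    records (inside B) (rev (lpre ++ N :: W :: lpost)).
Proof.
have C := tile_context_of_invariant; split.
- apply: eq_records_catl; last by rewrite (records_above_step Hw C hr).
  move=> m; apply/eq_below_cons2/esym/(below_step hr) => // /lsucc_lmax lt hlt.
    exact: ltn_trans hlt lt.
  exact: ltn_trans hlt lt.
- rewrite !rev_cat !rev_cons -!cats1 -!catA /=.
  apply: eq_records_catl; last by rewrite (records_inside_step Hw C hr).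
  move=> m; apply: eq_below_cons2; rewrite below_pairC [RHS]below_pairC.
  apply/esym/(below_step hr) => // h.
    exact: inside_lsucc (wa_B Hw) h (ctx_consE C) (ctx_subE C).
  exact: inside_lsucc (wa_B Hw) h (ctx_consS C) (ctx_subS C).
Qed.

End CatStep.

Section Run.

Variables (tau : nat -> letter) (t : seq nat) (b1 B : nat).
Hypothesis Hw : word_axioms tau t b1 B.

Lemma fe_step w lab p W N c : fe_invariant tau t w lab -> tile_ok w p ->
  fe_rule (nth L0 w p) (nth L0 w p.+1) (nth [::] lab p) (nth [::] lab p.+1) = (W, N, c) ->
  let w' := swap_at L0 w p in
  let lab' := set_nth [::] (set_nth [::] lab p N) p.+1 W in
  [/\ fe_invariant tau t w' lab',
      labelled L0 w lab = (c == Some SAlpha) + labelled L0 w' lab',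
      labelled LH w lab = (c == Some SBeta) + labelled LH w' lab',
      records (above b1) lab = records (above b1) lab' &
      records (inside B) (rev lab) = records (inside B) (rev lab')].
Proof.
move=> I /andP [hsz rk] hr /=.
have hszl : p.+1 < size lab by rewrite -(inv_size I).
have ew := take_nth_drop2 L0 hsz; have el := take_nth_drop2 [::] hszl.
have sw : size (take p w) = p by rewrite size_takel // ltnW // ltnW.
have sl : size (take p lab) = p by rewrite size_takel // ltnW // ltnW.
move: hr rk sw sl ew el I.
move: (nth L0 w p) (nth L0 w p.+1) (nth [::] lab p) (nth [::] lab p.+1) => x y E S.
move: (take p w) (drop p.+2 w) (take p lab) (drop p.+2 lab) => wpre wpost lpre lpost.
move=> hr rk sw sl -> -> I; have hs : size wpre = size lpre by rewrite sw sl.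
rewrite -sw swap_at_cat sw -sl set_nth2_cat.
have [z0 zH] := labelled_cat_step wpost lpost hs hr.
have [r1 r2] := records_cat_step Hw I hs rk hr.
split=> //; exact: (invariant_cat_step Hw I hs rk hr).
Qed.

Lemma fe_run s w lab wf : fe_invariant tau t w lab -> apply_tiles w s = Some wf ->
  exists2 labf, fe_invariant tau t wf labf &
  [/\ labelled L0 w lab = count_mem (Some SAlpha) (fe_fill w lab s) + labelled L0 wf labf,
      labelled LH w lab = count_mem (Some SBeta) (fe_fill w lab s) + labelled LH wf labf,
      records (above b1) lab = records (above b1) labf &
      records (inside B) (rev lab) = records (inside B) (rev labf)].
Proof.
elim: s w lab => [|p s IH] w lab I /=; first by case=> <-; exists lab.
case hok: (tile_ok w p) => // happ.
case hr: (fe_rule _ _ _ _) => [[W N] c].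
have [I' z0 zH r1 r2] := fe_step I hok hr.
have [labf If [z0' zH' r1' r2']] := IH _ _ I' happ.
exists labf => //; rewrite /= z0 zH z0' zH' r1 r2 r1' r2'.
by split; rewrite ?addnA.
Qed.

End Run.

(** * The northwest boundary *)

Section FinalWord.

Variables (tau : nat -> letter) (t : seq nat) (b1 B : nat).
Hypothesis Hw : word_axioms tau t b1 B.
Variables (l r k : nat) (lab : seq label).
Hypothesis I : fe_invariant tau t (nseq l L0 ++ nseq r LL ++ nseq k LH) lab.

Local Notation w := (nseq l L0 ++ nseq r LL ++ nseq k LH).
Local Notation "X `_ q" := (nth [::] X q).

Lemma final_letter q : q < size lab ->
  nth L0 w q = if q < l then L0 else if q < l + r then LL else LH.
Proof.
rewrite -(inv_size I) !size_cat !size_nseq => hq.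
rewrite nth_cat size_nseq; case: ltnP => h1; first by rewrite nth_nseq h1.
rewrite -(ltn_subLR _ h1) nth_cat size_nseq !nth_nseq.
by case: ltnP => // h2; case: ltnP => // h3; exfalso; lia.
Qed.

Lemma final_L0 q : q < size lab -> (nth L0 w q == L0) = (q < l).
Proof. by move=> hq; rewrite final_letter //; case: ltnP => // _; case: ifP. Qed.

Lemma final_LH q : q < size lab -> (nth L0 w q == LH) = (l + r <= q).
Proof.
move=> hq; rewrite final_letter // [l + r <= q]leqNgt.
case: (ltnP q l) => h1; last by case: ifP.
by rewrite ltn_addr.
Qed.

Lemma final_edge q : q < size lab -> lab`_q != [::] -> nth L0 w q = tau (lmax lab`_q).
Proof.
move=> hq hn; have /(all_nthP (L0, [::])) := inv_edges I.
rewrite size_zip -(inv_size I) minnn (inv_size I) => /(_ q hq).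
by rewrite nth_zip ?(inv_size I) // /edge_ok /= hn => /eqP.
Qed.

Lemma final_consecutive q : q < size lab -> consecutive lab`_q.
Proof. by move=> hq; apply: (inv_consecutive I); rewrite mem_nth. Qed.

Lemma final_sub q : q < size lab -> {subset lab`_q <= t}.
Proof.
move=> hq v hv; rewrite -(perm_mem (inv_perm I)).
by apply/flattenP; exists lab`_q; rewrite ?mem_nth.
Qed.

Lemma final_succ q : q < size lab ->
  succ_placed tau t (flatten (take q lab)) lab`_q (flatten (drop q.+1 lab)).
Proof. exact: (all_succ_placedP _ _ _).1 (inv_succ I) q. Qed.

Lemma final_disjoint i j v : i < size lab -> j < size lab ->
  v \in lab`_i -> v \in lab`_j -> i = j.
Proof. by apply: uniq_flatten_nth; rewrite (perm_uniq (inv_perm I)) (wa_uniq Hw). Qed.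

Lemma final_inner q v : q < size lab -> v \in lab`_q -> v != lmax lab`_q -> tau v != LL.
Proof. by move=> hq; apply: (inv_inner I); rewrite mem_nth. Qed.

(* By induction on the distance to the top of t: the successor of the maximum of
   a 0-label lies in an earlier label, which is again a 0-label. *)
Lemma final_decr_above d q : lmax t - lmax lab`_q < d -> q < size lab ->
  nth L0 w q = L0 -> lab`_q != [::] ->
  b1 < lmax lab`_q /\
  forall v, v \in t -> lmax lab`_q < v -> exists2 i, i < q & v \in lab`_i.
Proof.
elim: d q => // d IH q hd hq hw hn; set m := lmax lab`_q.
have mt : m \in t := final_sub hq (lmax_mem hn).
have tm : tau m = L0 by rewrite -(final_edge hq hn).
have ql : q < l by rewrite -final_L0 // hw.
case hm1: (m.+1 \in t); last first.
  have [hb htop] := wa_decr_top Hw mt tm (negbT hm1).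
  by split=> // v /htop hv hlt; lia.
have [/(_ tm) /mem_flatten_take [i] + hvi _] := final_succ hq hn hm1.
rewrite leq_min => /andP [iq isz]; have {}hvi : m.+1 \in lab`_i := hvi.
have ni : lab`_i != [::] by apply: contraTneq hvi => ->.
have hwi : nth L0 w i = L0 by apply/eqP; rewrite final_L0 //; lia.
have mi := leq_lmax hvi; have it := leq_lmax (final_sub isz (lmax_mem ni)).
have [hbi above_i] := IH i ltac:(lia) isz hwi ni.
have ci := final_consecutive isz ni.
split.
- rewrite ltnNge; apply/negP => mb.
  have mb' : m < b1.
    by rewrite ltn_neqAle mb andbT; apply: contraPneq tm => e; rewrite e (wa_b1 Hw) // -e.
  have bi : b1 \in lab`_i.
    by rewrite ci // (leq_trans (geq_lmin hvi)) // ltnW.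
  have /negP[] := final_inner isz bi (negbT (ltn_eqF hbi)).
  by rewrite (wa_b1 Hw (final_sub isz bi)).
- move=> v vt hv; case: (leqP v (lmax lab`_i)) => hvi'.
    by exists i => //; rewrite ci // hvi' andbT (leq_trans (geq_lmin hvi)).
  by have [j ji hvj] := above_i v vt hvi'; exists j => //; apply: ltn_trans iq.
Qed.

Lemma final_labelled_L0 : labelled L0 w lab = records (above b1) lab.
Proof.
rewrite /labelled (count_zip_nth L0 [::]) ?(inv_size I) // records_nth.
apply: eq_in_count => q; rewrite mem_iota add0n => /andP [_ hq] /=.
apply/andP/andP => [[/eqP hw hn]|[hb hbelow]].
- have [hb above_q] := final_decr_above (ltnSn _) hq hw hn; split=> //.
  apply/allP => J /(nthP [::]) [j]; rewrite size_drop nth_drop => hj <-.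
  apply/implyP => hJ; rewrite ltnNge; apply/negP => le.
  have nJ : lab`_(q.+1 + j) != [::] by apply: contraTneq hJ => ->.
  have jq : q.+1 + j < size lab by rewrite -ltn_subRL.
  have hmJ := lmax_mem nJ.
  case: ltngtP le => // [lt|e] _.
    have [i iq hv] := above_q _ (final_sub jq hmJ) lt.
    by have := final_disjoint (ltn_trans iq hq) jq hv hmJ; lia.
  have hmq : lmax lab`_q \in lab`_(q.+1 + j) by rewrite e.
  by have := final_disjoint hq jq (lmax_mem hn) hmq; lia.
- have hn : lab`_q != [::] by apply: contraTneq hb => ->.
  have mt := final_sub hq (lmax_mem hn).
  rewrite (final_edge hq hn); split=> //.
  case e: (tau _) => //; last by move: (wa_above_b1 Hw mt hb); rewrite e.
  have [_ /(_ e)] := final_succ hq hn (wa_incr_above_b1 Hw mt hb e).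
  by move/below_above_false => /(_ _ _ (ltnW hb) (leqnSn _)); rewrite hbelow.
Qed.

Lemma final_incr_below d q : lmax t - lmax lab`_q < d -> q < size lab ->
  nth L0 w q = LH -> lab`_q != [::] ->
  lmax lab`_q < B /\
  forall v, v \in t -> lmax lab`_q < v < B -> exists2 i, q < i < size lab & v \in lab`_i.
Proof.
elim: d q => // d IH q hd hq hw hn; set m := lmax lab`_q.
have mt : m \in t := final_sub hq (lmax_mem hn).
have tm : tau m = LH by rewrite -(final_edge hq hn).
have lrq : l + r <= q by rewrite -final_LH // hw.
case: (wa_incr Hw mt tm) => [hm1|hmB]; last by split=> [|v _ /andP [h1 h2]]; lia.
have [_ /(_ tm) /mem_flatten_drop [i /andP [qi isz] hvi]] := final_succ hq hn hm1.
have {}hvi : m.+1 \in lab`_i := hvi.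
have ni : lab`_i != [::] by apply: contraTneq hvi => ->.
have hwi : nth L0 w i = LH by apply/eqP; rewrite final_LH //; lia.
have mi := leq_lmax hvi; have it := leq_lmax (final_sub isz (lmax_mem ni)).
have [hBi below_i] := IH i ltac:(lia) isz hwi ni.
have ci := final_consecutive isz ni.
split; first lia.
move=> v vt /andP [hv hvB]; case: (leqP v (lmax lab`_i)) => hvi'.
  by exists i; rewrite ?qi // ci // hvi' andbT (leq_trans (geq_lmin hvi)).
have [j /andP [ij jsz] hvj] := below_i v vt (introT andP (conj hvi' hvB)).
by exists j; rewrite // jsz andbT (ltn_trans qi ij).
Qed.

Lemma final_labelled_LH : labelled LH w lab = records (inside B) (rev lab).
Proof.
rewrite /labelled (count_zip_nth L0 [::]) ?(inv_size I) // records_rev_nth.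
apply: eq_in_count => q; rewrite mem_iota add0n => /andP [_ hq] /=.
have take_nthP J : J \in take q lab -> exists2 j, j < q /\ j < size lab & J = lab`_j.
  case/(nthP [::]) => j; rewrite size_take_min leq_min => /andP [jq jsz].
  by rewrite nth_take // => <-; exists j.
apply/andP/andP => [[/eqP hw hn]|[hg hbelow]].
- have [hB below_q] := final_incr_below (ltnSn _) hq hw hn.
  have mt := final_sub hq (lmax_mem hn).
  split; first by rewrite /inside hB (wa_pos Hw mt).
  apply/allP => J /take_nthP [j [jq jsz] ->].
  apply/implyP => /andP [h0 hJB]; rewrite ltnNge; apply/negP => le.
  have nJ : lab`_j != [::] by apply: contraTneq h0 => ->.
  have hmJ := lmax_mem nJ.
  case: ltngtP le => // [lt|e] _.
    have [i /andP [qi isz] hv] := below_q _ (final_sub jsz hmJ) (introT andP (conj lt hJB)).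
    by have := final_disjoint isz jsz hv hmJ; lia.
  have hmq : lmax lab`_q \in lab`_j by rewrite e.
  by have := final_disjoint hq jsz (lmax_mem hn) hmq; lia.
- case/andP: (hg) => h0 hmB; have hn : lab`_q != [::] by apply: contraTneq h0 => ->.
  have mt := final_sub hq (lmax_mem hn).
  rewrite (final_edge hq hn); split=> //.
  case e: (tau _) => //; first by move: (wa_below_B Hw mt hmB); rewrite e.
  have s1 := wa_decr_below_B Hw mt hmB e.
  have [/(_ e) hv _] := final_succ hq hn s1.
  have s1B : (lmax lab`_q).+1 < B.
    by rewrite ltn_neqAle hmB andbT; apply: contraNneq (wa_B Hw) => <-.
  move: hbelow; rewrite (below_inside_false _ (wa_B Hw) hv _ (leqnSn _)) //.
  move=> J /take_nthP [j [_ jsz] ->].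
  by split; [apply: final_consecutive|apply: final_sub].
Qed.

End FinalWord.

(** * Assemblées *)

Lemma last_flatten (ss : seq (seq nat)) : all (fun b => b != [::]) ss ->
  last 0 (flatten ss) = last 0 (map (last 0) ss).
Proof.
elim: ss => //= b ss IH /andP [_]; rewrite last_cat.
case: ss IH => [|b' ss] //= IH.
by case/andP=> nb' hss; rewrite -IH /= ?nb' //; case: b' nb' {IH}.
Qed.

Lemma sorted_gtn_bounds (s : seq nat) : sorted (fun a b => b < a) s ->
  forall y, y \in s -> last 0 s <= y <= head 0 s.
Proof.
have tr : transitive (fun a b : nat => b < a) by move=> a b c h1 h2; apply: ltn_trans h2 h1.
have last_min x s' : path (fun a b => b < a) x s' -> last x s' <= x.
  by elim: s' x => //= z s' IH x /andP [hz /IH h]; apply: leq_trans h (ltnW hz).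
case: s => // x s hs y; rewrite inE => /orP [/eqP->|hy] /=.
  by rewrite leqnn andbT last_min.
have hxy : y < x by move/allP: (order_path_min tr hs); apply.
rewrite (ltnW hxy) andbT.
elim: s x hs hy {hxy} => //= z s IH x /andP [_ hs]; rewrite inE => /orP [/eqP->|hy].
  exact: last_min.
exact: IH hs hy.
Qed.

Lemma letter_ofLL A v : (letter_of A v == LL) = (v \in block_ends A).
Proof. by rewrite /letter_of /is_block_end; case: ifP => //; case: ifP. Qed.

Lemma letter_ofLH A v : (letter_of A v == LH) =
  (v \notin block_ends A) && (v.+1 \in drop (index v (aword A)).+1 (aword A)).
Proof. by rewrite /letter_of /is_increase /is_block_end; do 2 case: (_ \in _). Qed.

Lemma letter_ofL0 A v : (letter_of A v == L0) =
  (v \notin block_ends A) && (v.+1 \notin drop (index v (aword A)).+1 (aword A)).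
Proof. by rewrite /letter_of /is_increase /is_block_end; do 2 case: (_ \in _). Qed.

Lemma labelled_init A d : labelled d (XA A) (init_labels A) = count_mem d (XA A).
Proof.
by rewrite /labelled /XA /init_labels; elim: (aword_trunc A) => //= x s ->; rewrite andbT.
Qed.

Lemma below_seq1 g m (s : seq nat) :
  below g m [seq [:: x] | x <- s] = all (fun y => g y ==> (y < m)) s.
Proof. by rewrite /below all_map; apply: eq_all => y; rewrite /preim /= ?lmax1 ?maxn0. Qed.

Section Assemblee.

Variables (n r : nat) (A : seq (seq nat)).
Hypothesis hA : is_assemblee n.+1 r.+1 A.

Local Notation t := (aword_trunc A).
Local Notation tau := (letter_of A).

Let hsize : size A = r.+1. Proof. by case/and4P: hA => /eqP. Qed.
Let hblocks : all (fun b => b != [::]) A. Proof. by case/and4P: hA. Qed.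
Let hperm : perm_eq (aword A) (iota 1 n.+1). Proof. by case/and4P: hA. Qed.
Let hsorted : sorted (fun a b => b < a) (block_ends A). Proof. by case/and4P: hA. Qed.

Lemma size_aword : size (aword A) = n.+1.
Proof. by rewrite (perm_size hperm) size_iota. Qed.

Lemma size_aword_trunc : size t = n.
Proof. by rewrite /aword_trunc size_takel size_aword. Qed.

Lemma uniq_aword : uniq (aword A).
Proof. by rewrite (perm_uniq hperm) iota_uniq. Qed.

Lemma mem_aword v : (v \in aword A) = (0 < v <= n.+1).
Proof. by rewrite (perm_mem hperm) mem_iota add1n ltnS. Qed.

Lemma aword_rcons : aword A = rcons t (blast A).
Proof.
rewrite /blast /block_ends -last_flatten // -/(aword A) /aword_trunc.
have : aword A != [::] by rewrite -size_eq0 size_aword.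
case: (aword A) => // x s _ /=; rewrite {1}(lastI x s); congr rcons.
by rewrite lastI -cats1 take_size_cat ?size_belast.
Qed.

Lemma uniq_aword_trunc : uniq t && (blast A \notin t).
Proof. by have := uniq_aword; rewrite aword_rcons rcons_uniq andbC. Qed.

Lemma block_end_aword v : v \in block_ends A -> v \in aword A.
Proof.
case/mapP=> b hb ->; apply/flattenP; exists b => //.
by have := allP hblocks b hb; case: b {hb} => // c b _; apply: mem_last.
Qed.

Lemma bfirst_block_end : bfirst A \in block_ends A.
Proof. by rewrite /bfirst /block_ends; case: A hsize => //= b A' _; rewrite mem_head. Qed.

Lemma blast_block_end : blast A \in block_ends A.
Proof. by rewrite /blast /block_ends; case: A hsize => //= b A' _; apply: mem_last. Qed.

Lemma block_end_bounds v : v \in block_ends A -> blast A <= v <= bfirst A.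
Proof. exact: sorted_gtn_bounds. Qed.

Lemma size_block_ends : size (block_ends A) = r.+1.
Proof. by rewrite size_map. Qed.

Lemma uniq_block_ends : uniq (block_ends A).
Proof.
by apply: sorted_uniq hsorted => [a b c h1 h2|a]; [apply: ltn_trans h2 h1|rewrite ltnn].
Qed.

Lemma blast_right v : v \in t -> blast A \in drop (index v (aword A)).+1 (aword A).
Proof.
move=> hv; have hi : index v (aword A) < size t.
  by rewrite aword_rcons -cats1 index_cat hv index_mem.
by rewrite {2}aword_rcons drop_rcons // mem_rcons mem_head.
Qed.

Lemma word_axioms_assemblee : word_axioms tau t (bfirst A) (blast A).
Proof.
have /andP [ut Bt] := uniq_aword_trunc.
have inw v : v \in t -> v \in aword A by rewrite aword_rcons mem_rcons inE => ->; rewrite orbT.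
have inn v : v \in block_ends A -> 0 < v <= n.+1 by move/block_end_aword; rewrite mem_aword.
have /andP [_ Bb1] := block_end_bounds blast_block_end.
have := inn _ blast_block_end; have := inn _ bfirst_block_end.
move=> /andP [_ b1n] /andP [B0 _].
have incr v : v \in t -> tau v = LH -> v.+1 \in t \/ v.+1 = blast A.
  move=> hv /eqP; rewrite letter_ofLH => /andP [_ /mem_drop].
  by rewrite aword_rcons mem_rcons inE => /orP [/eqP->|->]; [right|left].
have decr v : v \in t -> tau v = L0 -> (v.+1 \in t) = (0 < v.+1 <= n.+1).
  move=> hv /eqP; rewrite letter_ofL0 -mem_aword aword_rcons mem_rcons inE => /andP [_ hnd].
  by case: eqP => // e; move: hnd; rewrite -aword_rcons e blast_right.
split=> //.
- by move=> v /inw; rewrite mem_aword => /andP [].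
- by move=> _; apply/eqP; rewrite letter_ofLL bfirst_block_end.
- by move=> v _ hb; rewrite letter_ofLL; apply/negP => /block_end_bounds /andP [_]; lia.
- by move=> v _ hb; rewrite letter_ofLL; apply/negP => /block_end_bounds /andP [+ _]; lia.
- by move=> v hv hb hl; case: (incr v hv hl) => // e; lia.
- by move=> v hv hB h0; rewrite decr //; lia.
- move=> v hv h0; rewrite decr // => hv1.
  have vn : v = n.+1 by move: (inw v hv); rewrite mem_aword; lia.
  split=> [|u /inw]; last by rewrite mem_aword vn => /andP [].
  rewrite ltn_neqAle vn b1n andbT; apply: contraPneq h0 => e.
  have : tau v == LL by rewrite letter_ofLL vn -e bfirst_block_end.
  by move/eqP->.
Qed.

Lemma init_succ_placed q : q < size t ->
  succ_placed tau t (take q t) [:: nth 0 t q] (drop q.+1 t).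
Proof.
move=> hq _; rewrite lmax1.
have /andP [ut Bt] := uniq_aword_trunc.
have ix : index (nth 0 t q) (aword A) = q.
  by rewrite aword_rcons -cats1 index_cat mem_nth // index_uniq.
have ex : t = take q t ++ nth 0 t q :: drop q.+1 t by rewrite -drop_nth ?cat_take_drop.
have wdrop : drop q.+1 (aword A) = rcons (drop q.+1 t) (blast A).
  by rewrite aword_rcons drop_rcons.
move: (nth 0 t q) ix ex => x ix ex ht; split=> /eqP.
- rewrite letter_ofL0 ix wdrop mem_rcons inE negb_or => /andP [_ /andP [_ hnd]].
  move: ht; rewrite {1}ex mem_cat inE (negbTE hnd) orbF.
  by rewrite (gtn_eqF (ltnSn x)) orbF.
- rewrite letter_ofLH ix wdrop mem_rcons inE => /andP [_ /orP [/eqP e|//]].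
  by move: Bt; rewrite -e ht.
Qed.

Lemma invariant_init : fe_invariant tau t (XA A) (init_labels A).
Proof.
rewrite /XA /init_labels; split.
- by rewrite !size_map.
- by rewrite flatten_seq1.
- by move=> J /mapP [x _ ->]; apply: consecutive1.
- by elim: (aword_trunc A) => //= x s ->; rewrite /edge_ok /= maxn0 eqxx.
- by move=> J /mapP [x _ ->] v; rewrite lmax1 inE => ->.
apply/all_succ_placedP => q; rewrite size_map => hq.
rewrite -map_take -map_drop !flatten_seq1 (nth_map 0) //; exact: init_succ_placed.
Qed.

Let iota_aword : iota 0 (size (aword A)) = iota 0 (size t) ++ [:: size t].
Proof. by rewrite aword_rcons size_rcons -addn1 iotaD. Qed.

Let nth_blast : nth 0 (aword A) (size t) = blast A.
Proof. by rewrite aword_rcons nth_rcons ltnn eqxx. Qed.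

Lemma records_init_lrs : records (above (bfirst A)) (init_labels A) = size (lrs A).
Proof.
have /andP [_ Bb1] := block_end_bounds blast_block_end.
rewrite /lrs size_map size_filter records_nth size_map iota_aword count_cat /=.
rewrite nth_blast (ltnNge (bfirst A) (blast A)) Bb1 /= !addn0.
apply: eq_in_count => q; rewrite mem_iota add0n => /andP [_ hq].
rewrite (nth_map 0) // lmax1 aword_rcons nth_rcons hq -map_drop below_seq1.
by rewrite drop_rcons // all_rcons /above (ltnNge (bfirst A) (blast A)) Bb1.
Qed.

Lemma records_init_rls : records (inside (blast A)) (rev (init_labels A)) = size (rls A).
Proof.
have pos := wa_pos word_axioms_assemblee.
rewrite /rls size_map size_filter records_rev_nth size_map iota_aword count_cat /=.
rewrite nth_blast ltnn /= !addn0.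
apply: eq_in_count => q; rewrite mem_iota add0n => /andP [_ hq].
rewrite (nth_map 0) // lmax1 aword_rcons nth_rcons hq -map_take below_seq1.
rewrite -cats1 takel_cat ?(ltnW hq) // /inside pos ?mem_nth //=; congr andb.
by apply: eq_in_all => y /mem_take /pos ->.
Qed.

Lemma count_LL : count_mem LL (XA A) = r.
Proof.
rewrite /XA count_map (eq_count (a2 := mem (block_ends A))) => [|x]; last exact: letter_ofLL.
have : count (mem (block_ends A)) (aword A) = r.+1.
  rewrite -size_filter -size_block_ends; apply/perm_size/uniq_perm.
  - exact/filter_uniq/uniq_aword.
  - exact: uniq_block_ends.
  - by move=> x; rewrite mem_filter andb_idr // => /block_end_aword.
by rewrite aword_rcons -cats1 count_cat /= blast_block_end addn1 => -[].
Qed.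

End Assemblee.

Lemma count_letters (X : seq letter) :
  count_mem L0 X + count_mem LL X + count_mem LH X = size X.
Proof. by elim: X => //= a X <-; case: a => /=; lia. Qed.

Local Open Scope ring_scope.

Theorem theorem3p2 (n r : nat) (A : seq (seq nat)) (i j : nat) (s : seq nat) :
  (r <= n)%N ->
  is_assemblee n.+1 r.+1 A ->
  size (lrs A) = i ->
  size (rls A) = j ->
  is_tiling (XA A) s ->
  wt_q1 (XA A) (TA A s) = (n%:Z - r%:Z - i%:Z, n%:Z - r%:Z - j%:Z).
Proof.
move=> _ hA <- <- /eqP happ; have Hw := word_axioms_assemblee hA.
have [labf If [z0 zH r1 r2]] := fe_run Hw (invariant_init hA) happ.
rewrite (final_labelled_L0 Hw If) -r1 (records_init_lrs hA) labelled_init in z0.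
rewrite (final_labelled_LH Hw If) -r2 (records_init_rls hA) labelled_init in zH.
have := count_letters (XA A).
rewrite (count_LL hA) /XA size_map (size_aword_trunc hA) -/(XA A).
rewrite /wt_q1 /wt /TA /=; move: z0 zH.
set a := count_mem L0 _; set c := count_mem LH _.
set x := count_mem _ (fe_fill _ _ _); set y := count_mem _ (fe_fill _ _ _).
by move=> z0 zH hsz; congr pair; lia.
Qed.
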